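(* Let $n$ be a positive even integer and let $\pi$ be chosen uniformly at random from the permutations of $[n]$ all of whose cycle lengths are even. For a positive integer $k\le n$, let $Y_k$ be the number of elements of $[n]$ lying in $k$-cycles of $\pi$. Then \[ \mathbb{E}_e^{(n)}Y_k=\frac{n(n-2)\cdots(n-k+2)}{(n-1)(n-3)\cdots(n-k+1)} \] if $k$ is even, and $\mathbb{E}_e^{(n)}Y_k=0$ if $k$ is odd.
   Context: $\mathbb{E}_e^{(n)}$ denotes expectation under the uniform measure on permutations of $[n]$ with all cycle lengths even. $Y_k=kX_k$, where $X_k$ is the number of $k$-cycles. *)

From mathcomp Require Import all_boot all_order all_algebra all_fingroup.
Unset Printing Implicit Defensive.
Import GRing.Theory Num.Theory.

Definition cycle_len (n : nat) (s : {perm 'I_n}) (x : 'I_n) : nat :=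
  #|porbit s x|.

Definition all_cycles_even (n : nat) (s : {perm 'I_n}) : bool :=
  [forall x, ~~ odd (cycle_len n s x)].

Definition even_perms (n : nat) : {set {perm 'I_n}} :=
  [set s | all_cycles_even n s].

Definition Y (n k : nat) (s : {perm 'I_n}) : nat :=
  #|[set x | cycle_len n s x == k]|.

Definition Ee (n : nat) (f : {perm 'I_n} -> nat) : rat :=
  ((\sum_(s in even_perms n) f s)%:R / (#|even_perms n|)%:R)%R.

From mathcomp Require Import all_boot all_order all_algebra all_fingroup.
Import GRing.Theory Num.Theory.
From mathcomp Require Import zify.

(* Fix a point x of an m-set A and sort the permutations of A whose cycles are all
   even by the length k of the cycle through x.  Those with k >= 2 correspond, via
   s = s' * (x y), to the permutations s' of A \ x in which y = s x lies in a
   (k-1)-cycle and all other cycles are even: multiplying by the transposition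
   splices x into the cycle of y.  Iterating, there are (m-1)^_(k-1) F(m-k) of them,
   where F(m) counts the all-even permutations of an m-set, and summing over even k
   gives F(m+2) = (m+1)^2 F(m).  Double counting the pairs (s, x) with x in a k-cycle
   of s gives the sum of Y_k = n (n-1)^_(k-1) F(n-k) for even k, and dividing by
   F(n) = F(n-k) ((n-1)(n-3)...(n-k+1))^2 yields the stated ratio. *)

Fixpoint even_cycle_count (m : nat) : nat :=
  match m with 0 => 1 | 1 => 0 | m'.+2 => m'.+1 * m'.+1 * even_cycle_count m' end.

Lemma sum_ffact_even_cycle_count n :
  \sum_(0 <= j < n.+1) odd j * n ^_ j * even_cycle_count (n - j) =
  even_cycle_count n.+1.
Proof.
pose S m := \sum_(0 <= j < m.+1) odd j * m ^_ j * even_cycle_count (m - j).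
have SSS m : S m.+2 = m.+2 * even_cycle_count m.+1 + m.+2 * m.+1 * S m.
  rewrite /S big_nat_recl // big_nat_recl //= mul0n add0n ffactn1 mul1n.
  congr (_ + _); rewrite big_distrr; apply: eq_bigr => i _.
  rewrite negbK !ffactSS !subSS /=.
  move: (odd i : nat) (m ^_ i) (even_cycle_count (m - i)) => a b c; nia.
suff: S n = even_cycle_count n.+1 /\ S n.+1 = even_cycle_count n.+2 by case.
elim: n => [|n [IH1 IH2]]; first by rewrite /S !big_nat_recl // !big_geq.
split => //; rewrite SSS IH1 /=; lia.
Qed.

Section PermOrbits.
Context {T : finType}.
Implicit Types (s t : {perm T}) (A B : {set T}) (x y z : T).

Lemma porbit_subset_closed s B x :
  x \in B -> {homo s : z / z \in B} -> porbit s x \subset B.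
Proof.
move=> xB sB; apply/subsetP => _ /porbitP [i ->].
by elim: i => [|i IHi]; rewrite ?perm1 // expgSr permM sB.
Qed.

Lemma porbit_closed s x z : z \in porbit s x -> s z \in porbit s x.
Proof.
by rewrite -eq_porbit_mem => /eqP <-; have := mem_porbit s 1 z; rewrite expg1.
Qed.

Lemma porbit_subset_perm_on A s x : perm_on A s -> x \in A -> porbit s x \subset A.
Proof. by move=> sA xA; apply: porbit_subset_closed => // z; rewrite perm_closed. Qed.

Lemma porbit_fix s x : s x = x -> porbit s x = [set x].
Proof.
move=> sx; apply/eqP; rewrite eqEsubset sub1set porbit_id andbT.
by apply: porbit_subset_closed => [|z /set1P ->]; rewrite ?sx set11.
Qed.

Lemma card_porbit_eq1 s x : (#|porbit s x| == 1) = (s x == x).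
Proof.
apply/idP/eqP => [/cards1P [a ax]|/porbit_fix ->]; last by rewrite cards1.
have := porbit_closed _ _ _ (porbit_id s x); rewrite ax.
by move: (porbit_id s x); rewrite ax => /set1P -> /set1P.
Qed.

Lemma porbit_eq_on s t x : {in porbit t x, s =1 t} -> porbit s x = porbit t x.
Proof.
move=> st; have sub_st : porbit s x \subset porbit t x.
  by apply: porbit_subset_closed (porbit_id t x) _ => z /[dup] /st ->; apply: porbit_closed.
apply/eqP; rewrite eqEsubset sub_st /=.
apply: porbit_subset_closed (porbit_id s x) _ => z zs.
by rewrite -st ?(subsetP sub_st) // porbit_closed.
Qed.

Lemma perm_onD1 A s x : perm_on (A :\ x) s = perm_on A s && (s x == x).
Proof.
apply/idP/andP => [sAx|[sA /eqP sx]]; first split.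
- exact: subset_trans sAx (subD1set _ _).
- by rewrite (out_perm sAx) ?setD11.
apply/subsetP => z; rewrite inE => sz; rewrite in_setD1 (subsetP sA) // andbT.
by apply: contraNneq sz => ->; rewrite sx.
Qed.

Lemma perm_on_mul_tperm A s x y :
  x \in A -> y \in A -> perm_on A (s * tperm x y)%g = perm_on A s.
Proof.
move=> xA yA; have tA : perm_on A (tperm x y).
  by apply: subset_trans (tperm_on x y) _; apply/subsetP => z /set2P [] ->.
apply/idP/idP => sA; last exact: perm_onM.
by rewrite -[s]mulg1 -(tperm2 x y) mulgA perm_onM.
Qed.

Section SpliceFixpoint.
Variables (s : {perm T}) (x y : T).
Hypotheses (sx : s x = x) (neq_xy : x != y).
Let t := (s * tperm x y)%g.

Lemma notin_porbit_fix : x \notin porbit s y.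
Proof. by rewrite porbit_sym porbit_fix // inE eq_sym. Qed.

Lemma porbit_mul_tperm_fix : porbit t x = x |: porbit s y.
Proof.
have tx : t x = y by rewrite permM sx tpermL.
apply/eqP; rewrite eqEsubset; apply/andP; split.
  apply: porbit_subset_closed => [|z /setU1P [->|zy]]; first exact: setU11.
    by rewrite tx setU1r ?porbit_id.
  rewrite permM; case: tpermP => [_|_|_ _]; rewrite ?setU11 // setU1r //.
    exact: porbit_id.
  exact: porbit_closed.
rewrite subUset sub1set porbit_id /=.
have yt : y \in porbit t x by rewrite -tx porbit_closed ?porbit_id.
apply: porbit_subset_closed => // z zt.
have -> : s z = tperm x y (t z) by rewrite permM tpermK.
by case: tpermP => [_|_|_ _]; rewrite ?porbit_id ?porbit_closed.
Qed.

Lemma porbit_mul_tperm_other z : z \notin porbit t x -> porbit t z = porbit s z.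
Proof.
rewrite porbit_mul_tperm_fix in_setU1 negb_or => /andP [zx zy].
apply: porbit_eq_on => w wz; rewrite permM tpermD //.
  apply: contraNneq zx => swx.
  have : z \in porbit s x by rewrite porbit_sym swx porbit_closed.
  by rewrite porbit_fix // => /set1P ->.
by apply: contraNneq zy => swy; rewrite porbit_sym swy porbit_closed.
Qed.

End SpliceFixpoint.

(* A permutation of the finite set A is an s with perm_on A s; the points outside A
   are then fixed, so parity conditions are only imposed on the cycles through A. *)
Definition even_off_porbit A s x :=
  [forall z in A, (z \notin porbit s x) ==> ~~ odd #|porbit s z|].

Definition porbit_len_perms A x k := [set s : {perm T} |
  [&& perm_on A s, #|porbit s x| == k & even_off_porbit A s x]].

Definition even_cycle_perms A :=
  [set s : {perm T} | perm_on A s && [forall z in A, ~~ odd #|porbit s z|]].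

Lemma even_cycle_permsE A s x : x \in A -> (s \in even_cycle_perms A) =
  [&& perm_on A s, even_off_porbit A s x & ~~ odd #|porbit s x|].
Proof.
move=> xA; rewrite inE; case: (perm_on A s) => //=.
apply/forallP/andP => [even_s | [/forallP even_off even_x] z].
  split; last by have := even_s x; rewrite xA.
  apply/forallP => z; apply/implyP => zA; apply/implyP => _.
  by have := even_s z; rewrite zA.
apply/implyP => zA; have := even_off z; rewrite zA /=.
by case: (boolP (z \in porbit s x)) => [|//]; rewrite -eq_porbit_mem => /eqP ->.
Qed.

Lemma card_even_cycle_perms_porbit A x k : x \in A ->
  #|[set s in even_cycle_perms A | #|porbit s x| == k]| =
  ~~ odd k * #|porbit_len_perms A x k|.
Proof.
move=> xA.
have -> : [set s in even_cycle_perms A | #|porbit s x| == k] =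
          if odd k then set0 else porbit_len_perms A x k.
  apply/setP => s; rewrite in_set (even_cycle_permsE _ _ _ xA).
  by case: ifP => ok; rewrite !inE; case: eqP => [->|]; rewrite ?ok ?andbF ?andbT.
by case: (odd k); rewrite ?cards0 ?mul1n.
Qed.

Lemma porbit_len_perms0 A x : porbit_len_perms A x 0 = set0.
Proof. by apply/setP => s; rewrite !inE (negbTE (card_porbit_neq0 _ _)) andbF. Qed.

Lemma porbit_len_perms1 A x : x \in A ->
  porbit_len_perms A x 1 = even_cycle_perms (A :\ x).
Proof.
move=> xA; apply/setP => s; rewrite !inE card_porbit_eq1 perm_onD1.
case: (perm_on A s); case: eqP => //= sx; rewrite /even_off_porbit porbit_fix //.
apply/forallP/forallP => even_off z; apply/implyP.
  by move=> /setD1P [zx zA]; have := even_off z; rewrite zA in_set1 zx.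
move=> zA; apply/implyP; rewrite in_set1 => zx.
by have := even_off z; rewrite in_setD1 zx zA.
Qed.

Lemma mul_tperm_porbit_len_perms A x y k s : x \in A -> y \in A :\ x -> s x = x ->
  ((s * tperm x y)%g \in porbit_len_perms A x k.+2) =
  (s \in porbit_len_perms (A :\ x) y k.+1).
Proof.
move=> xA /setD1P [yx yA] sx; have neq_xy : x != y by rewrite eq_sym.
have tx := porbit_mul_tperm_fix _ _ y sx.
have other z : z \notin x |: porbit s y -> porbit (s * tperm x y) z = porbit s z.
  by rewrite -tx; exact: porbit_mul_tperm_other.
rewrite !inE perm_onD1 sx eqxx andbT perm_on_mul_tperm // tx cardsU1.
rewrite notin_porbit_fix // add1n eqSS; congr [&& _, _ & _].
apply/forallP/forallP => even_off z; apply/implyP.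
  move=> /setD1P [zx zA]; apply/implyP => zy.
  have zxy : z \notin x |: porbit s y by rewrite in_setU1 negb_or zx.
  by have := even_off z; rewrite zA tx zxy other.
move=> zA; apply/implyP; rewrite tx => zxy; rewrite other //.
by move: zxy (even_off z); rewrite in_setU1 negb_or in_setD1 zA => /andP [-> ->].
Qed.

Lemma card_porbit_len_permsSS A x k : x \in A ->
  #|porbit_len_perms A x k.+2| =
  \sum_(y in A :\ x) #|porbit_len_perms (A :\ x) y k.+1|.
Proof.
move=> xA; rewrite -sum1_card (partition_big (fun s => s x) (mem (A :\ x))) /=; last first.
  move=> s; rewrite inE => /and3P [sA /eqP sxk _].
  by rewrite in_setD1 perm_closed // xA andbT -card_porbit_eq1 sxk.
apply: eq_bigr => y yAx; rewrite sum1dep_card.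
have fix_x s : s \in porbit_len_perms (A :\ x) y k.+1 -> s x = x.
  by rewrite inE perm_onD1 => /andP [/andP [_ /eqP]].
rewrite -[RHS](card_imset _ (mulIg (tperm x y))); apply: eq_card => s; rewrite [in LHS]in_set.
apply/andP/imsetP => [[sG /eqP sxy] | [s' s'G ->]].
  exists (s * tperm x y)%g; last by rewrite -mulgA tperm2 mulg1.
  by rewrite -mul_tperm_porbit_len_perms ?permM ?sxy ?tpermR // -mulgA tperm2 mulg1.
have s'x := fix_x s' s'G.
by rewrite mul_tperm_porbit_len_perms // s'G permM s'x tpermL.
Qed.

Lemma card_even_cycle_perms_sum A x : x \in A ->
  #|even_cycle_perms A| = \sum_(k < #|A|.+1) ~~ odd k * #|porbit_len_perms A x k|.
Proof.
move=> xA; pose len s : 'I_#|A|.+1 := inord #|porbit s x|.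
rewrite -sum1_card (partition_big len xpredT) //=; apply: eq_bigr => k _.
rewrite sum1dep_card -card_even_cycle_perms_porbit //; apply: eq_card => s.
rewrite [in LHS]in_set [in RHS]in_set; apply: andb_id2l; rewrite inE => /andP [sA _].
by rewrite -val_eqE /= inordK // ltnS subset_leq_card // porbit_subset_perm_on.
Qed.

Lemma card_porbit_len_perms A x k : x \in A ->
  (forall B : {set T}, #|B| = #|A| - k.+1 ->
     #|even_cycle_perms B| = even_cycle_count #|B|) ->
  #|porbit_len_perms A x k.+1| = #|A|.-1 ^_ k * even_cycle_count (#|A| - k.+1).
Proof.
elim: k A x => [|k IHk] A x xA cardE.
all: have cardA : #|A| = #|A :\ x|.+1 by rewrite (cardsD1 x A) xA.
all: rewrite cardA subSS ?subn0 in cardE *.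
  by rewrite porbit_len_perms1 // ffactn0 mul1n cardE.
rewrite card_porbit_len_permsSS // (eq_bigr _ (fun y yAx => IHk _ y yAx cardE)).
rewrite sum_nat_const /=.
by case: #|A :\ x| => [|m] //=; rewrite ffactSS mulnA.
Qed.

Lemma card_even_cycle_perms A : #|even_cycle_perms A| = even_cycle_count #|A|.
Proof.
have [m cardA] : {m | #|A| = m} by exists #|A|.
elim/ltn_ind: m A cardA => -[_ A /eqP|m IHm A cardA].
  rewrite cards_eq0 => /eqP ->; rewrite cards0 /= -(cards1 (1%g : {perm T})).
  apply: eq_card => s; rewrite !inE.
  apply/andP/eqP => [[s0 _]|->]; first by rewrite (perm_on_id s0) ?cards0.
  by split; [apply: perm_on1 | apply/forallP => z; rewrite inE].
have [x xA] : {x | x \in A} by apply/sigW/set0Pn; rewrite -card_gt0 cardA.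
rewrite (card_even_cycle_perms_sum _ _ xA) big_ord_recl porbit_len_perms0 cards0 muln0.
rewrite cardA -sum_ffact_even_cycle_count big_mkord; apply: eq_bigr => i _.
rewrite card_porbit_len_perms // ?cardA /= ?negbK ?mulnA // => B cardB.
by apply: IHm _ _ B cardB; rewrite subSS ltnS leq_subr.
Qed.

End PermOrbits.

Lemma ffact_double n j :
  n ^_ j.*2 = \prod_(i < j) ((n - 2 * i) * (n - 1 - 2 * i)).
Proof.
elim: j => [|j IHj]; first by rewrite big_ord0 ffactn0.
rewrite big_ord_recr /= -IHj doubleS !ffactnSr -mulnA; congr (_ * (_ * _)); lia.
Qed.

Lemma even_cycle_count_prod n j : j.*2 <= n ->
  even_cycle_count n =
  even_cycle_count (n - j.*2) * \prod_(i < j) ((n - 1 - 2 * i) * (n - 1 - 2 * i)).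
Proof.
elim: j => [|j IHj] le_jn; first by rewrite big_ord0 subn0 muln1.
rewrite doubleS in le_jn; rewrite big_ord_recr /= IHj; last lia.
have -> : n - j.*2 = (n - j.+1.*2).+2 by rewrite doubleS; lia.
rewrite /= (_ : (n - j.+1.*2).+1 = n - 1 - 2 * j); last by rewrite doubleS; lia.
set q := (n - 1 - 2 * j) * _; set P := \prod_(i < j) _.
by rewrite mulnAC [LHS]mulnC (mulnC q).
Qed.

Lemma even_cycle_count_gt0 n : ~~ odd n -> 0 < even_cycle_count n.
Proof.
elim/ltn_ind: n => -[|[|n]] IHn //=; rewrite negbK => even_n.
by rewrite !muln_gt0 IHn.
Qed.

Lemma ffact_mul_even_cycle_count n j : j.*2 <= n ->
  n ^_ j.*2 * even_cycle_count (n - j.*2) * \prod_(i < j) (n - 1 - 2 * i) =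
  \prod_(i < j) (n - 2 * i) * even_cycle_count n.
Proof.
move=> le_jn; rewrite ffact_double (even_cycle_count_prod _ _ le_jn) !big_split /=.
set a := \prod_(i < j) (n - 2 * i); set b := \prod_(i < j) (n - 1 - 2 * i).
by move: a b (even_cycle_count _) => a b c; nia.
Qed.

Lemma even_permsE n : even_perms n = even_cycle_perms [set: 'I_n].
Proof.
apply/setP => s; rewrite !inE /all_cycles_even.
have -> : perm_on [set: 'I_n] s by apply/subsetP => x; rewrite in_setT.
by apply: eq_forallb => x; rewrite in_setT.
Qed.

Lemma card_even_perms n : #|even_perms n| = even_cycle_count n.
Proof. by rewrite even_permsE card_even_cycle_perms cardsT card_ord. Qed.

Lemma sum_Y n k : 0 < k ->
  \sum_(s in even_perms n) Y n k s = ~~ odd k * (n ^_ k * even_cycle_count (n - k)).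
Proof.
case: k => // k _; rewrite even_permsE.
have cardY x : #|[set s in even_cycle_perms [set: 'I_n] | #|porbit s x| == k.+1]| =
               ~~ odd k.+1 * (n.-1 ^_ k * even_cycle_count (n - k.+1)).
  rewrite card_even_cycle_perms_porbit ?in_setT // card_porbit_len_perms ?in_setT //.
    by rewrite cardsT card_ord.
  by move=> B _; apply: card_even_cycle_perms.
under eq_bigr do rewrite /Y /cycle_len -sum1dep_card big_mkcond.
rewrite exchange_big /=.
under eq_bigr => x _ do rewrite -big_mkcondr sum1dep_card cardY.
by rewrite sum_nat_const card_ord ffactnS /= mulnCA !mulnA.
Qed.

Local Open Scope ring_scope.

Theorem proposition3p1 (n k : nat) :
  (0 < n)%N -> ~~ odd n -> (0 < k)%N -> (k <= n)%N ->
  Ee n (Y n k) =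
    (if ~~ odd k then
       (\prod_(i < k./2) (n - 2 * i)%N%:R) / (\prod_(i < k./2) (n - 1 - 2 * i)%N%:R)
     else 0).
Proof.
move=> _ even_n k_gt0 le_kn; rewrite /Ee sum_Y // card_even_perms.
case: ifP => even_k; last by rewrite /= mul0n mul0r.
set j := k./2; have kE : k = j.*2 by rewrite -[k in LHS]odd_double_half (negbTE even_k).
rewrite kE in le_kn *; rewrite mul1n -!natr_prod.
apply/eqP; rewrite eqr_div ?pnatr_eq0 -?lt0n ?even_cycle_count_gt0 //.
  by rewrite -!natrM eqr_nat ffact_mul_even_cycle_count.
rewrite prodn_gt0 // => i; have := ltn_ord i; lia.
Qed.
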